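(* Let $M=\{1,\dots,m\}$ carry the measure $\mu$ with atoms of positive masses $\mu_1,\dots,\mu_m$, and $N=\{1,\dots,n\}$ the measure $\nu$ with atoms of positive masses $\nu_1,\dots,\nu_n$. Let $t>0$ and $1\le q<p\le\infty$, $\alpha=1/q-1/p$, and $C(p,q)=(1-q/p)^{1/q}$. For real $m\times n$ matrices $a$ let $\|a\|$ be the $L^{p,\infty}(\mu)$ quasi-norm of $i\mapsto\big(\sum_{j\in N}|a(i,j)|^q\nu_j\big)^{1/q}$, let $\|a\|^{\top}$ be the $L^{p,\infty}(\nu)$ quasi-norm of $j\mapsto\big(\sum_{i\in M}|a(i,j)|^q\mu_i\big)^{1/q}$, let $\|a\|_{\ell^q}=\big(\sum_{i,j}|a(i,j)|^q\mu_i\nu_j\big)^{1/q}$, and $$|||a|||_{p,q,t}=\sup_{E,F}\big(\mu(E)^{\alpha}\vee t^{-1}\nu(F)^{\alpha}\big)^{-1}\|1_{E\times F}\cdot a\|_{\ell^q},$$ the supremum over nonempty $E\subset M$, $F\subset N$. Let $K_{p,q,t}(a)=\inf\{\|b\|+t\|c\|^{\top}: a=b+c\}$ (the $K_t$-functional of the couple $\ell^{p,\infty}_m(\ell^q_n),\ \ell^{p,\infty}_n(\ell^q_m)$). Then for every matrix $a$ $$C(p,q)\,|||a|||_{p,q,t}\le K_{p,q,t}(a)\le 2\,|||a|||_{p,q,t}.$$ More precisely, if $|||a|||_{p,q,t}\le1$ there are $A,B$ with $M\times N=A\cup B$, $A\cap B=\emptyset$, and $\|1_A\cdot a\|\le1$,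 $\|1_B\cdot a\|^{\top}\le1/t$.
   Context: For a nonnegative function $g$ on a measure space, $g^*(s)=\inf\{\lambda>0:\text{measure}\{g>\lambda\}\le s\}$ is its nonincreasing rearrangement and $\|g\|_{L^{p,\infty}}=\sup_{s>0}s^{1/p}g^*(s)$ (for $p=\infty$ this is the sup norm). $1_S$ is the indicator of $S$, $\cdot$ is entrywise multiplication, $u\vee v=\max(u,v)$. *)

From mathcomp Require Import all_boot all_order all_algebra.
From mathcomp Require Import all_classical all_reals all_analysis.
Set Implicit Arguments. Unset Strict Implicit. Unset Printing Implicit Defensive.
Import Order.TTheory GRing.Theory Num.Theory.
Local Open Scope classical_set_scope.
Local Open Scope ring_scope.

Section Defs.
Variable R : realType.

Definition msr (k : nat) (w : 'I_k -> R) (E : {set 'I_k}) : R :=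
  \sum_(i in E) w i.

Definition rearr (k : nat) (w : 'I_k -> R) (g : 'I_k -> R) (s : R) : R :=
  inf [set l : R | 0 < l /\ msr w [set i | l < g i] <= s].

Definition weak_norm (p : \bar R) (k : nat) (w : 'I_k -> R) (g : 'I_k -> R)
  : \bar R :=
  match p with
  | r%:E => ereal_sup [set ((s `^ r^-1) * rearr w g s)%:E | s in [set s : R | 0 < s]]
  | +oo%E => (\big[Num.max/0]_(i < k) g i)%:E
  | -oo%E => 0%E
  end.

Definition einv (p : \bar R) : R :=
  match p with r%:E => r^-1 | _ => 0 end.

Definition rowq (m n : nat) (q : R) (nu : 'I_n -> R) (a : 'M[R]_(m, n))
  (i : 'I_m) : R := (\sum_(j < n) `|a i j| `^ q * nu j) `^ q^-1.

Definition colq (m n : nat) (q : R) (mu : 'I_m -> R) (a : 'M[R]_(m, n))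
  (j : 'I_n) : R := (\sum_(i < m) `|a i j| `^ q * mu i) `^ q^-1.

Definition mnorm (m n : nat) (p : \bar R) (q : R) (mu : 'I_m -> R)
  (nu : 'I_n -> R) (a : 'M[R]_(m, n)) : \bar R := weak_norm p mu (rowq q nu a).
Definition mnormT (m n : nat) (p : \bar R) (q : R) (mu : 'I_m -> R)
  (nu : 'I_n -> R) (a : 'M[R]_(m, n)) : \bar R := weak_norm p nu (colq q mu a).

Definition lq_norm (m n : nat) (q : R) (mu : 'I_m -> R) (nu : 'I_n -> R)
  (a : 'M[R]_(m, n)) : R :=
  (\sum_(i < m) \sum_(j < n) `|a i j| `^ q * mu i * nu j) `^ q^-1.

Definition indmul (m n : nat) (A : {set 'I_m * 'I_n}) (a : 'M[R]_(m, n))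
  : 'M[R]_(m, n) := \matrix_(i, j) (if (i, j) \in A then a i j else 0).

Definition triple_norm (m n : nat) (p : \bar R) (q t : R) (mu : 'I_m -> R)
  (nu : 'I_n -> R) (a : 'M[R]_(m, n)) : \bar R :=
  let alpha := q^-1 - einv p in
  ereal_sup [set ((Num.max (msr mu EF.1 `^ alpha) (t^-1 * msr nu EF.2 `^ alpha))^-1
                  * lq_norm q mu nu (indmul (finset.setX EF.1 EF.2) a))%:E
            | EF in [set EF : {set 'I_m} * {set 'I_n} | EF.1 != finset.set0 /\ EF.2 != finset.set0]].

Definition Kfun (m n : nat) (p : \bar R) (q t : R) (mu : 'I_m -> R)
  (nu : 'I_n -> R) (a : 'M[R]_(m, n)) : \bar R :=
  ereal_inf [set (mnorm p q mu nu bc.1 + t%:E * mnormT p q mu nu bc.2)%E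
            | bc in [set bc : 'M[R]_(m, n) * 'M[R]_(m, n) | a = bc.1 + bc.2]].

Definition Cpq (p : \bar R) (q : R) : R := (1 - q * einv p) `^ q^-1.

End Defs.

From mathcomp Require Import all_boot all_order all_algebra.
From mathcomp Require Import all_classical all_reals all_analysis.
From mathcomp Require Import fintype finset ring lra zify.
Import Order.TTheory GRing.Theory Num.Theory.

(* Write beta = 1 - q/p, so that alpha q = beta and C(p,q)^q = beta.
   For g >= 0, ||g||_{L^{p,oo}(w)} <= N amounts to g_i w{g >= g_i}^{1/p} <= N for
   all i. Removing the smallest value of g on E one at a time and using the
   concavity of x^beta, this yields sum_{i in E} g_i^q w_i <= N^q w(E)^beta / beta;
   conversely sum_{i in E} g_i^q w_i <= N^q w(E)^beta for all E gives ||g|| <= N.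
   Lower bound: for a = b + c, Minkowski's inequality on a rectangle E x F and the
   first estimate for the rows of b and the columns of c bound ||1_{ExF} a||_q by
   (||b|| mu(E)^alpha + ||c||^T nu(F)^alpha) / C(p,q).
   Upper bound: |||a||| <= T says that every rectangle E x F has mass at most
   max (phi E, psi F), where phi E = T^q mu(E)^beta and psi F = (T/t)^q nu(F)^beta
   have diminishing returns since x^beta is concave. An induction on |M| + |N|,
   removing a set of rows (or columns) of maximal excess mass, splits M x N into
   A, whose rows satisfy the second estimate with phi, and its complement, whose
   columns satisfy it with psi. *)

Set Implicit Arguments. Unset Strict Implicit.
Local Open Scope ring_scope.

(** * Powers *)

Section PowR.
Variable R : realType.
Implicit Types a b c h l r x y : R.

Lemma le_powR2r r x y : 0 < r -> 0 <= x -> 0 <= y -> (x `^ r <= y `^ r) = (x <= y).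
Proof.
move=> r0 x0 y0; apply/idP/idP => [|xy]; last first.
  by apply: ge0_ler_powR; rewrite ?nnegrE // ltW.
apply: contraTT; rewrite -!ltNge => yx.
by apply: gt0_ltr_powR; rewrite ?nnegrE.
Qed.

Lemma lt_powR2r r x y : 0 < r -> 0 <= x -> 0 <= y -> (x `^ r < y `^ r) = (x < y).
Proof. by move=> r0 x0 y0; rewrite !ltNge le_powR2r. Qed.

Lemma powRK r x : r != 0 -> 0 <= x -> (x `^ r) `^ r^-1 = x.
Proof. by move=> r0 x0; rewrite -powRrM mulfV // powRr1. Qed.

Lemma powRVK r x : r != 0 -> 0 <= x -> (x `^ r^-1) `^ r = x.
Proof. by move=> r0 x0; rewrite -powRrM mulVf // powRr1. Qed.

Lemma powRVl r x : 0 <= x -> x^-1 `^ r = (x `^ r)^-1.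
Proof. by move=> x0; rewrite -powR_inv1 // -powRrM mulN1r powRN. Qed.

Lemma powR1B r x : 0 < x -> x `^ (1 - r) = x / x `^ r.
Proof. by move=> x0; rewrite powRB ?(gt_eqF x0) ?implybT // powRr1 // ltW. Qed.

Lemma powR_max r x y : 0 < r -> 0 <= x -> 0 <= y ->
  (Num.max x y) `^ r = Num.max (x `^ r) (y `^ r).
Proof.
move=> r0 x0 y0; have [xy|yx] := leP x y.
  by rewrite !max_r // le_powR2r.
by rewrite !max_l ?le_powR2r // ltW.
Qed.

Lemma convex_powR2 r l x y : 1 <= r -> 0 <= l <= 1 -> 0 <= x -> 0 <= y ->
  (l * x + (1 - l) * y) `^ r <= l * x `^ r + (1 - l) * y `^ r.
Proof.
move=> r1 /andP[l0 l1] x0 y0.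
have := @convex_powR R r r1 (Itv01 l0 l1) x y.
by rewrite !convRE !in_setE /= !in_itv /= x0 y0 andbT; apply.
Qed.

(* Concavity of [x `^ b] follows from convexity of its inverse [x `^ b^-1]. *)
Lemma concave_powR2 b l x y : 0 < b <= 1 -> 0 <= l <= 1 -> 0 <= x -> 0 <= y ->
  l * x `^ b + (1 - l) * y `^ b <= (l * x + (1 - l) * y) `^ b.
Proof.
move=> /andP[b0 b1] l01 x0 y0.
have bi0 : 0 < b^-1 by rewrite invr_gt0.
have bi1 : 1 <= b^-1 by rewrite invr_ge1 ?unitfE ?gt_eqF.
have := convex_powR2 bi1 l01 (powR_ge0 x b) (powR_ge0 y b).
rewrite !powRK ?gt_eqF // => H.
have /andP[l0 l1] := l01; have l1' : 0 <= 1 - l by rewrite subr_ge0.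
rewrite -(le_powR2r bi0) ?addr_ge0 ?mulr_ge0 ?powR_ge0 //.
by rewrite powRK ?gt_eqF // addr_ge0 ?mulr_ge0.
Qed.

(* Young's inequality [conjugate_powR] with exponents [1/b] and [1/(1 - b)]. *)
Lemma powR_le_tangent b x y : 0 < b <= 1 -> 0 < x -> 0 <= y ->
  y `^ b <= x `^ b + b * (x `^ b / x) * (y - x).
Proof.
move=> /andP[b0 b1] x0 y0.
have [->|bne1] := eqVneq b 1.
  by rewrite !powRr1 ?(ltW x0) // mulfV ?gt_eqF //; lra.
have b1' : b < 1 by rewrite lt_neqAle bne1.
set z := y / x.
have z0 : 0 <= z by rewrite divr_ge0 // ltW.
have Hs : b^-1^-1 + (1 - b)^-1^-1 = 1 by rewrite !invrK addrC subrK.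
have bi0 : 0 < b^-1 by rewrite invr_gt0.
have ci0 : 0 < (1 - b)^-1 by rewrite invr_gt0 subr_gt0.
have := @conjugate_powR R (z `^ b) 1 b^-1 (1 - b)^-1 (powR_ge0 _ _) ler01 bi0 ci0 Hs.
rewrite mulr1 powRK ?gt_eqF // powR1 !invrK => Hz.
have -> : y = z * x by rewrite /z divfK ?gt_eqF.
rewrite powRM //; last exact: ltW.
have -> : x `^ b + b * (x `^ b / x) * (z * x - x) = (z * b + 1 * (1 - b)) * x `^ b.
  by field; rewrite gt_eqF.
by rewrite ler_wpM2r // powR_ge0.
Qed.

(* Write [a + h] and [c] as convex combinations of [a] and [c + h]. *)
Lemma powR_increment_le b a c h : 0 < b <= 1 -> 0 <= a <= c -> 0 <= h ->
  (c + h) `^ b - c `^ b <= (a + h) `^ b - a `^ b.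
Proof.
move=> bb /andP[a0 ac] h0.
have [d0|dn0] := eqVneq (c + h - a) 0.
  by have -> : a = c by lra.
have dp : 0 < c + h - a by rewrite lt_neqAle eq_sym dn0; lra.
set l := h / (c + h - a).
have l0 : 0 <= l <= 1.
  by rewrite divr_ge0 ?ler_pdivrMr ?(ltW dp) //= ?mul1r; lra.
have l0' : 0 <= 1 - l <= 1 by lra.
have E1 : a + h = l * (c + h) + (1 - l) * a by rewrite /l; field; rewrite dn0.
have E2 : c = (1 - l) * (c + h) + (1 - (1 - l)) * a by rewrite /l; field; rewrite dn0.
have C1 := concave_powR2 bb l0 (addr_ge0 (le_trans a0 ac) h0) a0.
have C2 := concave_powR2 bb l0' (addr_ge0 (le_trans a0 ac) h0) a0.
rewrite -E1 in C1; rewrite -E2 in C2.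
lra.
Qed.

Lemma minkowski_sum_degenerate (K : finType) q (om f g : K -> R) :
  0 < q -> (forall k, 0 <= om k) -> (forall k, 0 <= f k) ->
  \sum_k f k `^ q * om k <= 0 ->
  forall k, (f k + g k) `^ q * om k = g k `^ q * om k.
Proof.
move=> q0 om0 f0 Hf k.
have Hf0 : \sum_k f k `^ q * om k = 0.
  by apply: le_anti; rewrite Hf sumr_ge0 // => i _; rewrite mulr_ge0 ?powR_ge0.
have /eqP := @psumr_eq0P _ _ _ _ (fun i _ => mulr_ge0 (powR_ge0 (f i) q) (om0 i)) Hf0 k isT.
by rewrite mulf_eq0 => /orP[/eqP/powR_eq0_eq0 ->|/eqP ->]; rewrite ?add0r ?mulr0.
Qed.

Lemma powRD_le_split q l x y : 1 <= q -> 0 < l < 1 -> 0 <= x -> 0 <= y ->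
  (x + y) `^ q <= l / l `^ q * x `^ q + (1 - l) / (1 - l) `^ q * y `^ q.
Proof.
move=> q1 /andP[l0 l1] x0 y0.
have l1p : 0 < 1 - l by rewrite subr_gt0.
have -> : x + y = l * (x / l) + (1 - l) * (y / (1 - l)) by field; rewrite !gt_eqF.
have l01 : 0 <= l <= 1 by rewrite !ltW.
apply: le_trans (convex_powR2 q1 l01 (divr_ge0 x0 (ltW l0)) (divr_ge0 y0 (ltW l1p))) _.
rewrite !powRM ?invr_ge0 ?(ltW l0) ?(ltW l1p) // !powRVl ?(ltW l0) ?(ltW l1p) //.
by rewrite le_eqVlt; apply: predU1l; ring.
Qed.

(* Take [l = X / (X + Y)] in [powRD_le_split]. *)
Lemma minkowski_sum (K : finType) q (om f g : K -> R) X Y :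
  1 <= q -> (forall k, 0 <= om k) -> (forall k, 0 <= f k) -> (forall k, 0 <= g k) ->
  0 <= X -> 0 <= Y ->
  \sum_k f k `^ q * om k <= X `^ q -> \sum_k g k `^ q * om k <= Y `^ q ->
  \sum_k (f k + g k) `^ q * om k <= (X + Y) `^ q.
Proof.
move=> q1 om0 f0 g0 X0 Y0 Hf Hg.
have q0 : 0 < q by apply: lt_le_trans q1.
have qn0 : q != 0 by rewrite gt_eqF.
have [X0'|Xn] := eqVneq X 0.
  rewrite X0' powR0 // in Hf.
  by rewrite X0' add0r (eq_bigr _ (fun k _ => minkowski_sum_degenerate g q0 om0 f0 Hf k)).
have [Y0'|Yn] := eqVneq Y 0.
  rewrite Y0' powR0 // in Hg.
  under eq_bigr => k _ do rewrite addrC.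
  by rewrite Y0' addr0 (eq_bigr _ (fun k _ => minkowski_sum_degenerate f q0 om0 g0 Hg k)).
have Xp : 0 < X by rewrite lt_neqAle eq_sym Xn.
have Yp : 0 < Y by rewrite lt_neqAle eq_sym Yn.
set Z := X + Y; have Zp : 0 < Z by rewrite addr_gt0.
set l := X / Z.
have l0 : 0 < l by rewrite divr_gt0.
have l1 : 1 - l = Y / Z by rewrite /l /Z; field; rewrite gt_eqF.
have l1p : 0 < 1 - l by rewrite l1 divr_gt0.
have l01 : 0 < l < 1 by rewrite l0 -subr_gt0 l1p.
have pt k : (f k + g k) `^ q * om k <=
    l / l `^ q * (f k `^ q * om k) + (1 - l) / (1 - l) `^ q * (g k `^ q * om k).
  apply: le_trans (ler_wpM2r (om0 k) (powRD_le_split q1 l01 (f0 k) (g0 k))) _.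
  by rewrite le_eqVlt; apply: predU1l; ring.
apply: le_trans (ler_sum _ (fun k _ => pt k)) _.
rewrite big_split /= -!mulr_sumr.
apply: le_trans (lerD (ler_wpM2l _ Hf) (ler_wpM2l _ Hg)) _; try by rewrite divr_ge0 ?powR_ge0 ?ltW.
have -> : X `^ q = l `^ q * Z `^ q by rewrite -powRM ?ltW // /l divfK ?gt_eqF.
have -> : Y `^ q = (1 - l) `^ q * Z `^ q by rewrite -powRM ?ltW // l1 divfK ?gt_eqF.
rewrite le_eqVlt; apply: predU1l.
by field; rewrite !gt_eqF ?powR_gt0.
Qed.

End PowR.

(** * Weak-type norms *)

Lemma sumr_setU (R : realType) (T : finType) (f : T -> R) (X Y : {set T}) :
  [disjoint X & Y] -> \sum_(x in X :|: Y) f x = \sum_(x in X) f x + \sum_(x in Y) f x.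
Proof. by move=> dXY; rewrite -bigU //; apply: eq_bigl => x; rewrite !inE. Qed.

Lemma sumr_subset_le (R : realType) (T : finType) (f : T -> R) (X Y : {set T}) :
  (forall x, 0 <= f x) -> X \subset Y -> \sum_(x in X) f x <= \sum_(x in Y) f x.
Proof.
move=> f0 XY; rewrite [X in _ <= X](big_setID X) /=.
have /setIidPr -> := XY.
by rewrite lerDl sumr_ge0.
Qed.

Section Measure.
Variables (R : realType) (k : nat) (w : 'I_k -> R).
Hypothesis w_gt0 : forall i, 0 < w i.

Lemma msr_ge0 (E : {set 'I_k}) : 0 <= msr w E.
Proof. by rewrite /msr sumr_ge0 // => i _; exact: ltW. Qed.

Lemma msr_gt0 (E : {set 'I_k}) : E != set0 -> 0 < msr w E.
Proof.
case/set0Pn => i iE; rewrite /msr (bigD1 i) //=.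
by rewrite ltr_pwDl // sumr_ge0 // => j _; exact: ltW.
Qed.

Lemma msr0 : msr w set0 = 0.
Proof. by rewrite /msr big_set0. Qed.

Lemma msrU (E F : {set 'I_k}) : [disjoint E & F] -> msr w (E :|: F) = msr w E + msr w F.
Proof. exact: sumr_setU. Qed.

Lemma msr_le (E F : {set 'I_k}) : E \subset F -> msr w E <= msr w F.
Proof. by apply: sumr_subset_le => i; exact: ltW. Qed.

End Measure.

Definition superlevel (R : realType) (k : nat) (g : 'I_k -> R) (x : R) : {set 'I_k} :=
  [set j | x <= g j].

Section Rearrangement.
Variables (R : realType) (k : nat) (w g : 'I_k -> R).
Hypothesis w_gt0 : forall i, 0 < w i.
Hypothesis g_ge0 : forall i, 0 <= g i.

Lemma rearr_le l s : 0 < l -> msr w [set i | l < g i] <= s -> rearr w g s <= l.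
Proof. by move=> l0 Hl; apply: ge_inf => //; exists 0 => x [x0 _]; exact: ltW. Qed.

Lemma rearr_set_neq0 s : 0 < s ->
  ([set l : R | 0 < l /\ msr w [set i | l < g i] <= s] !=set0)%classic.
Proof.
move=> s0; exists (\sum_i g i + 1); split; first by rewrite ltr_pwDr // sumr_ge0.
rewrite (_ : [set i | _]%SET = set0) ?msr0 ?ltW //; apply/setP => i.
by rewrite !inE ltNge (bigD1 i) //= -addrA lerDl addr_ge0 // sumr_ge0.
Qed.

Lemma rearr_ge0 s : 0 < s -> 0 <= rearr w g s.
Proof. by move=> s0; apply: lb_le_inf (rearr_set_neq0 s0) _ => l [l0 _]; exact: ltW. Qed.

Lemma le_rearr x s : 0 < s -> s < msr w (superlevel g x) -> x <= rearr w g s.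
Proof.
move=> s0 sW; apply: lb_le_inf (rearr_set_neq0 s0) _ => l [l0 Hl].
rewrite leNgt; apply/negP => lx.
have Wl : msr w (superlevel g x) <= msr w [set i | l < g i].
  by apply: msr_le => //; apply/subsetP => j; rewrite !inE => /(lt_le_trans lx).
by have := lt_le_trans sW (le_trans Wl Hl); rewrite ltxx.
Qed.

End Rearrangement.

Section WeakNorm.
Variables (R : realType) (k : nat) (w g : 'I_k -> R) (p : \bar R).
Hypothesis w_gt0 : forall i, 0 < w i.
Hypothesis g_ge0 : forall i, 0 <= g i.
Hypothesis p_gt0 : (0 < p)%E.

Lemma weak_norm_ge0 : (0 <= weak_norm p w g)%E.
Proof.
case: p p_gt0 => [r| |] //= _; last first.
  by rewrite lee_fin; apply: (big_ind (fun x => 0 <= x)) => // x y x0 _; rewrite le_max x0.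
apply: ereal_sup_ge; exists (1 `^ r^-1 * rearr w g 1)%:E; first by exists 1 => //=; rewrite ltr01.
by rewrite lee_fin mulr_ge0 ?powR_ge0 ?rearr_ge0.
Qed.

Lemma weak_norm_le_level N : (weak_norm p w g <= N%:E)%E ->
  forall i, g i * msr w (superlevel g (g i)) `^ einv p <= N.
Proof.
move=> HN i; set W := msr w _.
have N0 : 0 <= N by rewrite -lee_fin (le_trans weak_norm_ge0 HN).
have W0 : 0 < W by apply: msr_gt0 => //; apply/set0Pn; exists i; rewrite inE.
case: p p_gt0 HN => [r| |] //= r0 HN; last first.
  by rewrite powRr0 mulr1 -lee_fin (le_trans _ HN) // lee_fin le_bigmax.
rewrite lte_fin in r0; have ri0 : 0 < r^-1 by rewrite invr_gt0.
rewrite leNgt; apply/negP => Hlt.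
have gi0 : 0 < g i.
  by rewrite lt_neqAle g_ge0 andbT; apply: contraTneq Hlt => <-; rewrite mul0r -leNgt.
(* Any [s] with [(N / g i) `^ r < s < W] has [s `^ r^-1 * rearr w g s > N]. *)
set s0 := (N / g i) `^ r.
have Hs0 : s0 `^ r^-1 = N / g i by rewrite powRK ?gt_eqF // divr_ge0 // ltW.
have s0W : s0 < W.
  by rewrite -(lt_powR2r ri0) ?powR_ge0 ?ltW // Hs0 ltr_pdivrMr // mulrC.
set s := (s0 + W) / 2.
have s0s : s0 < s by rewrite /s; lra.
have sp : 0 < s by apply: le_lt_trans s0s; apply: powR_ge0.
have Hrs : g i <= rearr w g s by apply: le_rearr => //; rewrite -/W /s; lra.
have Hel : s `^ r^-1 * rearr w g s <= N.
  rewrite -lee_fin (le_trans _ HN) //; apply: ereal_sup_ge.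
  by exists (s `^ r^-1 * rearr w g s)%:E => //; exists s.
have : N / g i < s `^ r^-1 by rewrite -Hs0 lt_powR2r ?powR_ge0 ?ltW.
rewrite ltr_pdivrMr // => HH.
by have := lt_le_trans HH (le_trans (ler_wpM2l (powR_ge0 _ _) Hrs) Hel); rewrite ltxx.
Qed.

Lemma weak_norm_le_of_levels N : 0 < N ->
  (forall i, g i * msr w (superlevel g (g i)) `^ einv p <= N) ->
  (weak_norm p w g <= N%:E)%E.
Proof.
move=> N0 HN; case: p p_gt0 HN => [r| |] //= r0 HN; last first.
  rewrite lee_fin; apply/bigmax_leP; split => [|i _]; first exact: ltW.
  by have := HN i; rewrite powRr0 mulr1.
rewrite lte_fin in r0; have ri0 : 0 < r^-1 by rewrite invr_gt0.
apply: ge_ereal_sup => _ [s s0 <-]; rewrite lee_fin.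
have sp : 0 < s `^ r^-1 by rewrite powR_gt0.
set l := N / s `^ r^-1.
have l0 : 0 < l by rewrite divr_gt0.
suff : rearr w g s <= l.
  by move/(ler_wpM2l (ltW sp)); rewrite [_ * (N / _)]mulrC divfK ?gt_eqF.
apply: (rearr_le l0).
set E := [set i | l < g i].
have [->|/set0Pn [i0]] := eqVneq E set0; first by rewrite msr0 ltW.
rewrite inE => i0E.
have [i iE imin] := @arg_minP _ _ _ i0 (fun j => l < g j) g i0E.
have gi0 : 0 < g i by apply: lt_trans iE.
have EW : msr w E <= msr w (superlevel g (g i)).
  by apply: msr_le => //; apply/subsetP => j; rewrite !inE => /imin.
apply: ltW; apply: le_lt_trans EW _.
rewrite -(lt_powR2r ri0) ?msr_ge0 ?ltW //.
apply: le_lt_trans (_ : N / g i < _).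
  by rewrite ler_pdivlMr // mulrC HN.
by rewrite ltr_pdivrMr // mulrC -ltr_pdivrMr.
Qed.

End WeakNorm.

Section Exponents.
Variables (R : realType) (p : \bar R) (q : R).
Hypothesis q_gt0 : 0 < q.
Hypothesis qp : (q%:E < p)%E.

Lemma p_gt0 : (0 < p)%E.
Proof. exact: lt_trans qp. Qed.

Lemma einv_ge0 : 0 <= einv p.
Proof. by case: p qp => [r| |] //= qr; rewrite invr_ge0 ltW // (lt_trans q_gt0). Qed.

Lemma q_einv_lt1 : q * einv p < 1.
Proof.
case: p qp => [r| |] //=; rewrite ?mulr0 // lte_fin => qr.
by rewrite ltr_pdivrMr ?mul1r // (lt_trans q_gt0).
Qed.

Lemma beta_gt0 : 0 < 1 - q * einv p.
Proof. by rewrite subr_gt0 q_einv_lt1. Qed.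

Lemma beta_itv : 0 < 1 - q * einv p <= 1.
Proof. by rewrite beta_gt0 lerBlDr lerDl mulr_ge0 ?einv_ge0 ?ltW. Qed.

End Exponents.

Section WeakNormSums.
Variables (R : realType) (k : nat) (w g : 'I_k -> R) (p : \bar R) (q : R).
Hypothesis w_gt0 : forall i, 0 < w i.
Hypothesis g_ge0 : forall i, 0 <= g i.
Hypothesis q_gt0 : 0 < q.
Hypothesis qp : (q%:E < p)%E.

Local Notation beta := (1 - q * einv p).

Lemma weak_norm_le_of_sums N : 0 < N ->
  (forall E : {set 'I_k}, E != set0 ->
     \sum_(i in E) g i `^ q * w i <= N `^ q * msr w E `^ beta) ->
  (weak_norm p w g <= N%:E)%E.
Proof.
move=> N0 HN; apply: weak_norm_le_of_levels => // [|i]; first exact: p_gt0 qp.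
set E := superlevel g (g i); set X := msr w E.
have X0 : 0 < X by apply: msr_gt0 => //; apply/set0Pn; exists i; rewrite inE.
have HE : g i `^ q * X <= N `^ q * X `^ beta.
  apply: le_trans (HN E _); last by apply/set0Pn; exists i; rewrite inE.
  rewrite /X /msr mulr_sumr; apply: ler_sum => j; rewrite inE => gij.
  by apply: ler_wpM2r; [exact: ltW | rewrite le_powR2r].
rewrite -(le_powR2r q_gt0) ?mulr_ge0 ?powR_ge0 ?g_ge0 ?(ltW N0) //.
rewrite powRM ?powR_ge0 ?g_ge0 // -powRrM (mulrC (einv p)) -(ler_pM2r X0) mulrAC.
by move: HE; rewrite powR1B // mulrA ler_pdivlMr ?powR_gt0.
Qed.

(* [powR_le_tangent] at [msr w E], since [g i <= N / msr w E `^ einv p]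
   by [weak_norm_le_level]. *)
Lemma pow_mass_le_increment N (E : {set 'I_k}) i :
  (weak_norm p w g <= N%:E)%E -> i \in E -> (forall j, j \in E -> g i <= g j) ->
  g i `^ q * w i <= N `^ q * (msr w E `^ beta - msr w (E :\ i) `^ beta) / beta.
Proof.
move=> HN iE imin.
have bb := beta_itv q_gt0 qp; have /andP[b0 _] := bb.
set x := msr w E; set y := msr w (E :\ i).
have xy : x = w i + y.
  by rewrite /x /y /msr (big_setD1 i iE).
have x0 : 0 < x by apply: msr_gt0 => //; apply/set0Pn; exists i.
have Kx : g i * x `^ einv p <= N.
  apply: le_trans (weak_norm_le_level w_gt0 g_ge0 (p_gt0 q_gt0 qp) HN i).
  apply: ler_wpM2l; first exact: g_ge0.
  apply: ge0_ler_powR; rewrite ?nnegrE ?msr_ge0 ?(einv_ge0 q_gt0 qp) //.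
  by apply: msr_le => //; apply/subsetP => j /imin; rewrite inE.
have gx : g i `^ q * w i <= N `^ q * w i * (x `^ beta / x).
  have -> : x `^ beta / x = (x `^ (q * einv p))^-1.
    by rewrite powR1B // mulrAC mulfV ?gt_eqF // mul1r.
  rewrite mulrAC ler_pM2r // ler_pdivlMr ?powR_gt0 //.
  have : (g i * x `^ einv p) `^ q <= N `^ q.
    by rewrite le_powR2r ?mulr_ge0 ?powR_ge0 ?g_ge0 ?(le_trans _ Kx) ?mulr_ge0 ?powR_ge0 ?g_ge0.
  by rewrite powRM ?powR_ge0 ?g_ge0 // -powRrM (mulrC (einv p)).
have T := powR_le_tangent bb x0 (msr_ge0 w_gt0 (E :\ i)).
apply: le_trans gx _.
rewrite ler_pdivlMr // -!mulrA; apply: ler_wpM2l; first exact: powR_ge0.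
rewrite -/y (_ : y - x = - w i) in T; last by rewrite xy; ring.
lra.
Qed.

Lemma sum_pow_le_weak_norm N : (weak_norm p w g <= N%:E)%E ->
  forall E : {set 'I_k}, \sum_(i in E) g i `^ q * w i <= N `^ q * msr w E `^ beta / beta.
Proof.
move=> HN E; have [n] := ubnP #|E|; elim: n E => // n IH E; rewrite ltnS => cardE.
have b0 := beta_gt0 q_gt0 qp.
have [->|/set0Pn [i1 i1E]] := eqVneq E set0.
  by rewrite big_set0 divr_ge0 ?mulr_ge0 ?powR_ge0 ?ltW.
have [i iE imin] := @arg_minP _ _ _ i1 (fun j => j \in E) g i1E.
have IHE : \sum_(j in E :\ i) g j `^ q * w j <= N `^ q * msr w (E :\ i) `^ beta / beta.
  by apply: IH; move: cardE; rewrite (cardsD1 i E) iE.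
rewrite (big_setD1 i iE) /=.
apply: le_trans (lerD (pow_mass_le_increment HN iE imin) IHE) _.
by rewrite le_eqVlt; apply: predU1l; field; rewrite gt_eqF.
Qed.

End WeakNormSums.

(** * A splitting lemma *)

Section DiminishingReturns.
Variables (R : realType) (T : finType).

Definition diminishing_returns (phi : {set T} -> R) :=
  forall E0 E1 E2 : {set T}, E1 \subset E0 -> [disjoint E2 & E0] ->
    phi (E0 :|: E2) + phi E1 <= phi (E1 :|: E2) + phi E0.

Lemma exists_proper_argmax (f : {set T} -> R) (M E : {set T}) :
  E \proper M -> f M <= f E ->
  exists2 E0 : {set T}, E0 \proper M & forall X : {set T}, X \subset M -> f X <= f E0.
Proof.
move=> EM fME; have [E0 E0M Hmax] := @arg_maxP _ _ _ E (fun X => X \proper M) f EM.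
exists E0 => // X XM; have [->|XnM] := eqVneq X M; first exact: le_trans fME (Hmax E EM).
by apply: Hmax; rewrite properEneq XnM.
Qed.

(* A set [E0] maximizing the excess [s - phi] over the subsets of [M] cannot be
   enlarged profitably, and diminishing returns transport this to any [E]. *)
Lemma argmax_excess_gain (s phi : {set T} -> R) (M E0 E : {set T}) :
  (forall X Y : {set T}, [disjoint X & Y] -> s (X :|: Y) = s X + s Y) ->
  diminishing_returns phi -> E0 \subset M ->
  (forall X : {set T}, X \subset M -> s X - phi X <= s E0 - phi E0) ->
  E \subset M -> s (E :\: E0) + phi (E :&: E0) <= phi E.
Proof.
move=> sU dim E0M Hmax EM.
have dE : [disjoint E :\: E0 & E0].
  by apply/setDidPl; rewrite setDDl setUid.
have := Hmax (E0 :|: (E :\: E0)); rewrite sU 1?disjoint_sym // subUset E0M.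
move=> /(_ (subset_trans (subsetDl E E0) EM)).
have := dim E0 (E :&: E0) (E :\: E0) (subsetIr E E0) dE.
rewrite setID; lra.
Qed.

End DiminishingReturns.

Section Split.
Variables (R : realType) (I J : finType) (w : I * J -> R).
Variables (phi : {set I} -> R) (psi : {set J} -> R).
Hypotheses (phi0 : phi set0 = 0) (psi0 : psi set0 = 0).
Hypotheses (phi_ge0 : forall E, 0 <= phi E) (psi_ge0 : forall F, 0 <= psi F).
Hypotheses (phi_dim : diminishing_returns phi) (psi_dim : diminishing_returns psi).

Local Notation S X := (\sum_(x in X) w x).

(* [A] is the part of [M x N] sent to the rows, the rest goes to the columns. *)
Definition admissible_split (M : {set I}) (N : {set J}) (A : {set I * J}) :=
  [/\ A \subset setX M N,
      forall E : {set I}, E \subset M -> S (A :&: setX E [set: J]) <= phi E &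
      forall F : {set J}, F \subset N -> S ((setX M N :\: A) :&: setX [set: I] F) <= psi F].

Lemma admissible_split_set0 (M : {set I}) (N : {set J}) :
  setX M N = set0 -> admissible_split M N set0.
Proof.
move=> MN0; split => [|E _|F _]; first exact: sub0set.
  by rewrite set0I big_set0.
by rewrite MN0 set0D set0I big_set0.
Qed.

Lemma admissible_split_rows (M E0 : {set I}) (N : {set J}) (A0 : {set I * J}) :
  E0 \subset M ->
  (forall E : {set I}, E \subset M -> S (setX E N) - phi E <= S (setX E0 N) - phi E0) ->
  admissible_split E0 N A0 -> admissible_split M N (A0 :|: setX (M :\: E0) N).
Proof.
move=> E0M Hmax [A0sub A0row A0col].
have hA i j : ((i, j) \in A0) ==> (i \in E0) && (j \in N).
  by apply/implyP => /(subsetP A0sub); rewrite inE.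
have hE0 i : (i \in E0) ==> (i \in M) by apply/implyP => /(subsetP E0M).
split.
- apply/subsetP => -[i j]; rewrite !inE /=; move: (hA i j) (hE0 i).
  by case: ((i, j) \in A0); case: (i \in E0); case: (i \in M); case: (j \in N).
- move=> E EM.
  have hE i : (i \in E) ==> (i \in M) by apply/implyP => /(subsetP EM).
  have -> : (A0 :|: setX (M :\: E0) N) :&: setX E [set: J] =
            (A0 :&: setX (E :&: E0) [set: J]) :|: setX (E :\: E0) N.
    apply/setP => -[i j]; rewrite !inE /=; move: (hA i j) (hE0 i) (hE i).
    by case: ((i, j) \in A0); case: (i \in E0); case: (i \in M); case: (j \in N);
      case: (i \in E).
  rewrite sumr_setU; last first.
    rewrite -setI_eq0; apply/eqP/setP => -[i j]; rewrite !inE /=.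
    by case: (i \in E0); rewrite ?andbF.
  apply: le_trans (argmax_excess_gain (s := fun X => S (setX X N)) _ phi_dim E0M Hmax EM).
    by rewrite addrC lerD2l A0row // subsetIr.
  move=> X Y dXY; rewrite -sumr_setU; last first.
    rewrite -setI_eq0; apply/eqP/setP => -[i j]; rewrite !inE /=.
    by case: (boolP (i \in X)) => iX //; rewrite (disjointFr dXY iX) /= andbF.
  by apply: eq_bigl => -[i j]; rewrite !inE /= andb_orl.
- move=> F FN.
  have -> : setX M N :\: (A0 :|: setX (M :\: E0) N) = setX E0 N :\: A0.
    apply/setP => -[i j]; rewrite !inE /=; move: (hA i j) (hE0 i).
    by case: ((i, j) \in A0); case: (i \in E0); case: (i \in M); case: (j \in N).
  exact: A0col.
Qed.

Lemma admissible_split_cols (M : {set I}) (N F0 : {set J}) (A0 : {set I * J}) :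
  F0 \subset N ->
  (forall F : {set J}, F \subset N -> S (setX M F) - psi F <= S (setX M F0) - psi F0) ->
  admissible_split M F0 A0 -> admissible_split M N A0.
Proof.
move=> F0N Hmax [A0sub A0row A0col].
have hA i j : ((i, j) \in A0) ==> (i \in M) && (j \in F0).
  by apply/implyP => /(subsetP A0sub); rewrite inE.
have hF0 j : (j \in F0) ==> (j \in N) by apply/implyP => /(subsetP F0N).
split => // [|F FN].
  apply/subsetP => -[i j]; rewrite !inE /=; move: (hA i j) (hF0 j).
  by case: ((i, j) \in A0); case: (j \in F0); case: (i \in M); case: (j \in N).
have hF j : (j \in F) ==> (j \in N) by apply/implyP => /(subsetP FN).
have -> : (setX M N :\: A0) :&: setX [set: I] F =
          ((setX M F0 :\: A0) :&: setX [set: I] (F :&: F0)) :|: setX M (F :\: F0).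
  apply/setP => -[i j]; rewrite !inE /=; move: (hA i j) (hF0 j) (hF j).
  by case: ((i, j) \in A0); case: (j \in F0); case: (i \in M); case: (j \in N);
    case: (j \in F).
rewrite sumr_setU; last first.
  rewrite -setI_eq0; apply/eqP/setP => -[i j]; rewrite !inE /=.
  by case: (j \in F0); rewrite ?andbF.
apply: le_trans (argmax_excess_gain (s := fun X => S (setX M X)) _ psi_dim F0N Hmax FN).
  by rewrite addrC lerD2l A0col // subsetIr.
move=> X Y dXY; rewrite -sumr_setU; last first.
  rewrite -setI_eq0; apply/eqP/setP => -[i j]; rewrite !inE /=.
  by case: (boolP (j \in X)) => jX; rewrite ?andbF //= (disjointFr dXY jX) !andbF.
by apply: eq_bigl => -[i j]; rewrite !inE /= andb_orr.
Qed.

Hypothesis S_le_max : forall (E : {set I}) (F : {set J}), E != set0 -> F != set0 ->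
  S (setX E F) <= Num.max (phi E) (psi F).

(* Induction on [#|M| + #|N|]: either some proper [E0] carries the largest excess
   [S (E0 x N) - phi E0], and [M :\: E0] goes to the rows, or [M x N] is too heavy
   for [phi M], hence light for [psi N], and symmetrically a proper [F0] is found. *)
Lemma exists_admissible_split n (M : {set I}) (N : {set J}) :
  (#|M| + #|N| < n)%N -> exists A, admissible_split M N A.
Proof.
elim: n M N => // n IH M N; rewrite ltnS => card.
have [MN0|/set0Pn [[i0 j0]]] := eqVneq (setX M N) set0.
  by exists set0; apply: admissible_split_set0.
rewrite inE /= => /andP[i0M j0N].
have Mn0 : M != set0 by apply/set0Pn; exists i0.
have Nn0 : N != set0 by apply/set0Pn; exists j0.
pose ex E := S (setX E N) - phi E.
have ex0 : ex set0 = 0.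
  rewrite /ex phi0 subr0 (_ : setX _ _ = set0) ?big_set0 //.
  by apply/setP => -[i j]; rewrite !inE.
have [/existsP [E /andP[EM HE]]|/existsPn Hno] :=
  boolP [exists E : {set I}, (E \proper M) && (ex M <= ex E)].
  have [E0 E0M Hmax] := exists_proper_argmax EM HE.
  have [|A0 HA0] := IH E0 N; first by have := proper_card E0M; lia.
  exists (A0 :|: setX (M :\: E0) N).
  by apply: admissible_split_rows HA0 => //; exact: proper_sub.
have exM : 0 < ex M by have := Hno set0; rewrite proper0 Mn0 -ltNge ex0.
have SMN : S (setX M N) <= psi N.
  have := S_le_max Mn0 Nn0; rewrite le_max => /orP[h|//].
  by move: exM; rewrite subr_gt0 ltNge h.
pose ex' F := S (setX M F) - psi F.
have ex'N : ex' N <= ex' set0.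
  rewrite /ex' psi0 subr0 (_ : setX M set0 = set0) ?big_set0; first by lra.
  by apply/setP => -[i j]; rewrite !inE andbF.
have N0 : set0 \proper N by rewrite proper0.
have [F0 F0N Hmax] := exists_proper_argmax N0 ex'N.
have [|A0 HA0] := IH M F0; first by have := proper_card F0N; lia.
by exists A0; apply: admissible_split_cols HA0 => //; exact: proper_sub.
Qed.

Lemma exists_split : exists A : {set I * J},
  (forall E : {set I}, S (A :&: setX E [set: J]) <= phi E) /\
  (forall F : {set J}, S (~: A :&: setX [set: I] F) <= psi F).
Proof.
have [|A [_ HE HF]] := @exists_admissible_split (#|I| + #|J|).+1 [set: I] [set: J].
  by rewrite !cardsT.
exists A; split => [E|F]; first exact/HE/subsetT.
have -> : ~: A = setX [set: I] [set: J] :\: A.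
  by apply/setP => -[i j]; rewrite !inE /= andbT.
exact/HF/subsetT.
Qed.

End Split.

(** * Matrices *)

Lemma diminishing_returns_msr (R : realType) (k : nat) (w : 'I_k -> R) (C b : R) :
  (forall i, 0 < w i) -> 0 <= C -> 0 < b <= 1 ->
  diminishing_returns (fun E => C * msr w E `^ b).
Proof.
move=> w0 C0 bb E0 E1 E2 E10 dE20.
rewrite -!mulrDr; apply: ler_wpM2l => //.
rewrite !msrU 1?disjoint_sym ?(disjointWr E10) //.
have := @powR_increment_le _ b (msr w E1) (msr w E0) (msr w E2) bb.
rewrite msr_ge0 // msr_le // msr_ge0 // => /(_ isT isT); lra.
Qed.

Lemma sumr_pair (R : realType) (I J : finType) (A : {set I * J}) (f : I * J -> R) :
  \sum_(x in A) f x = \sum_i \sum_j if (i, j) \in A then f (i, j) else 0.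
Proof. by rewrite pair_bigA big_mkcond; apply: eq_bigr => -[i j]. Qed.

Section Matrices.
Variables (R : realType) (m n : nat) (mu : 'I_m -> R) (nu : 'I_n -> R).
Variables (p : \bar R) (q t : R).
Hypotheses (mu_gt0 : forall i, 0 < mu i) (nu_gt0 : forall j, 0 < nu j).
Hypotheses (t_gt0 : 0 < t) (q_ge1 : 1 <= q) (qp : (q%:E < p)%E).

Local Notation alpha := (q^-1 - einv p).
Local Notation beta := (1 - q * einv p).

Let q_gt0 : 0 < q := lt_le_trans ltr01 q_ge1.

Lemma alpha_mulq : alpha * q = beta.
Proof. by rewrite mulrBl mulVf ?gt_eqF ?q_gt0 // mulrC. Qed.

Definition entry_mass (a : 'M[R]_(m, n)) (x : 'I_m * 'I_n) : R :=
  `|a x.1 x.2| `^ q * (mu x.1 * nu x.2).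

Lemma entry_mass_ge0 a x : 0 <= entry_mass a x.
Proof. by rewrite mulr_ge0 ?powR_ge0 // mulr_ge0 ?ltW. Qed.

Lemma entry_mass_indmul (A : {set 'I_m * 'I_n}) a x :
  entry_mass (indmul A a) x = if x \in A then entry_mass a x else 0.
Proof.
rewrite /entry_mass mxE -surjective_pairing.
by case: (x \in A); rewrite // normr0 powR0 ?mul0r ?gt_eqF ?q_gt0.
Qed.

Lemma sum_entry_mass_indmul (A B : {set 'I_m * 'I_n}) a :
  \sum_(x in B) entry_mass (indmul A a) x = \sum_(x in A :&: B) entry_mass a x.
Proof.
rewrite [RHS]big_mkcond [LHS]big_mkcond; apply: eq_bigr => x _.
by rewrite entry_mass_indmul inE; case: (x \in A); case: (x \in B).
Qed.

Lemma sum_rowq a (E : {set 'I_m}) :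
  \sum_(i in E) rowq q nu a i `^ q * mu i = \sum_(x in setX E [set: 'I_n]) entry_mass a x.
Proof.
rewrite big_mkcond sumr_pair; apply: eq_bigr => i _.
rewrite /rowq powRVK ?gt_eqF ?q_gt0 ?sumr_ge0 // => [|j _]; last first.
  by rewrite mulr_ge0 ?powR_ge0 ?ltW.
case: ifP => iE; last by rewrite big1 // => j _; rewrite inE iE.
by rewrite mulr_suml; apply: eq_bigr => j _; rewrite !inE iE /entry_mass /= mulrAC -mulrA.
Qed.

Lemma sum_colq a (F : {set 'I_n}) :
  \sum_(j in F) colq q mu a j `^ q * nu j = \sum_(x in setX [set: 'I_m] F) entry_mass a x.
Proof.
rewrite big_mkcond sumr_pair exchange_big /=; apply: eq_bigr => j _.
rewrite /colq powRVK ?gt_eqF ?q_gt0 ?sumr_ge0 // => [|i _]; last first.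
  by rewrite mulr_ge0 ?powR_ge0 ?ltW.
case: ifP => jF; last by rewrite big1 // => i _; rewrite !inE jF andbF.
by rewrite mulr_suml; apply: eq_bigr => i _; rewrite !inE jF /entry_mass /= -mulrA.
Qed.

Lemma lq_normK a : lq_norm q mu nu a `^ q = \sum_x entry_mass a x.
Proof.
rewrite /lq_norm powRVK ?gt_eqF ?q_gt0 ?sumr_ge0 // => [|i _]; last first.
  by rewrite sumr_ge0 // => j _; rewrite !mulr_ge0 ?powR_ge0 ?ltW.
by rewrite pair_bigA; apply: eq_bigr => -[i j] _; rewrite /entry_mass /= mulrA.
Qed.

Lemma lq_norm_indmul (A : {set 'I_m * 'I_n}) a :
  lq_norm q mu nu (indmul A a) `^ q = \sum_(x in A) entry_mass a x.
Proof.
rewrite lq_normK [RHS]big_mkcond; apply: eq_bigr => x _.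
by rewrite entry_mass_indmul.
Qed.

Lemma exists_split_weak_norms a T : 0 < T ->
  (forall (E : {set 'I_m}) (F : {set 'I_n}), E != set0 -> F != set0 ->
     lq_norm q mu nu (indmul (setX E F) a) <=
     T * Num.max (msr mu E `^ alpha) (t^-1 * msr nu F `^ alpha)) ->
  exists A : {set 'I_m * 'I_n},
    (mnorm p q mu nu (indmul A a) <= T%:E)%E /\
    (mnormT p q mu nu (indmul (~: A) a) <= (T / t)%:E)%E.
Proof.
move=> T0 Ha.
have [q0 bb] := (q_gt0, beta_itv q_gt0 qp).
have ti0 : 0 <= t^-1 by rewrite invr_ge0 ltW.
pose phi E := T `^ q * msr mu E `^ beta.
pose psi F := (T / t) `^ q * msr nu F `^ beta.
have Smax (E : {set 'I_m}) (F : {set 'I_n}) : E != set0 -> F != set0 ->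
    \sum_(x in setX E F) entry_mass a x <= Num.max (phi E) (psi F).
  move=> En Fn; rewrite -lq_norm_indmul.
  have X0 : 0 <= msr mu E `^ alpha by apply: powR_ge0.
  have Y0 : 0 <= t^-1 * msr nu F `^ alpha by rewrite mulr_ge0 ?powR_ge0.
  set X := msr mu E `^ alpha; set Y := t^-1 * msr nu F `^ alpha.
  apply: le_trans (_ : (T * Num.max X Y) `^ q <= _).
    by rewrite le_powR2r ?powR_ge0 ?Ha // mulr_ge0 ?le_max ?X0 ?(ltW T0).
  rewrite maxr_pMr ?(ltW T0) // powR_max ?mulr_ge0 ?powR_ge0 ?(ltW T0) // /phi /psi /X /Y.
  by rewrite !powRM ?mulr_ge0 ?powR_ge0 ?(ltW T0) // -!powRrM alpha_mulq mulrA.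
have b0 : beta != 0 by rewrite gt_eqF //; case/andP: bb.
have phi0 : phi set0 = 0 by rewrite /phi msr0 powR0 ?mulr0.
have psi0 : psi set0 = 0 by rewrite /psi msr0 powR0 ?mulr0.
have [A [HA HB]] := exists_split phi0 psi0
  (fun E => mulr_ge0 (powR_ge0 _ _) (powR_ge0 _ _))
  (fun F => mulr_ge0 (powR_ge0 _ _) (powR_ge0 _ _))
  (diminishing_returns_msr mu_gt0 (powR_ge0 _ _) bb)
  (diminishing_returns_msr nu_gt0 (powR_ge0 _ _) bb) Smax.
have Tt : 0 < T / t by rewrite divr_gt0.
exists A; split.
  apply: (weak_norm_le_of_sums mu_gt0 _ q0 qp T0) => [i|E _]; first exact: powR_ge0.
  by rewrite sum_rowq sum_entry_mass_indmul HA.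
apply: (weak_norm_le_of_sums nu_gt0 _ q0 qp Tt) => [j|F _]; first exact: powR_ge0.
by rewrite sum_colq sum_entry_mass_indmul HB.
Qed.

Lemma Cpq_gt0 : 0 < Cpq p q.
Proof. by apply: powR_gt0; case/andP: (beta_itv q_gt0 qp). Qed.

Lemma Cpq_powq : Cpq p q `^ q = beta.
Proof. by rewrite /Cpq powRVK ?gt_eqF ?q_gt0 // ltW //; case/andP: (beta_itv q_gt0 qp). Qed.

Lemma mnorm_ge0 a : (0 <= mnorm p q mu nu a)%E.
Proof. by apply: (weak_norm_ge0 mu _ (p_gt0 q_gt0 qp)) => i; exact: powR_ge0. Qed.

Lemma mnormT_ge0 a : (0 <= mnormT p q mu nu a)%E.
Proof. by apply: (weak_norm_ge0 nu _ (p_gt0 q_gt0 qp)) => j; exact: powR_ge0. Qed.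

Lemma sum_entry_mass_le_mnorm a (E : {set 'I_m}) (F : {set 'I_n}) N :
  (mnorm p q mu nu a <= N%:E)%E ->
  \sum_(x in setX E F) entry_mass a x <= N `^ q * msr mu E `^ beta / beta.
Proof.
move=> HN; apply: le_trans (_ : \sum_(x in setX E [set: 'I_n]) entry_mass a x <= _).
  by apply: sumr_subset_le => [x|]; [exact: entry_mass_ge0 | rewrite setXS ?subsetT].
rewrite -sum_rowq; apply: (sum_pow_le_weak_norm mu_gt0 _ q_gt0 qp HN) => i.
exact: powR_ge0.
Qed.

Lemma sum_entry_mass_le_mnormT a (E : {set 'I_m}) (F : {set 'I_n}) N :
  (mnormT p q mu nu a <= N%:E)%E ->
  \sum_(x in setX E F) entry_mass a x <= N `^ q * msr nu F `^ beta / beta.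
Proof.
move=> HN; apply: le_trans (_ : \sum_(x in setX [set: 'I_m] F) entry_mass a x <= _).
  by apply: sumr_subset_le => [x|]; [exact: entry_mass_ge0 | rewrite setXS ?subsetT].
rewrite -sum_colq; apply: (sum_pow_le_weak_norm nu_gt0 _ q_gt0 qp HN) => j.
exact: powR_ge0.
Qed.

Lemma powq_alpha_Cpq N M : 0 <= N -> 0 <= M ->
  (N * M `^ alpha / Cpq p q) `^ q = N `^ q * M `^ beta / beta.
Proof.
move=> N0 M0; have C0 : 0 <= Cpq p q by apply: powR_ge0.
rewrite !powRM ?mulr_ge0 ?powR_ge0 ?invr_ge0 //.
by rewrite powRVl // Cpq_powq -powRrM alpha_mulq.
Qed.

Lemma lq_norm_indmul_le a b c (E : {set 'I_m}) (F : {set 'I_n}) Nb Nc :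
  a = b + c -> (mnorm p q mu nu b <= Nb%:E)%E -> (mnormT p q mu nu c <= Nc%:E)%E ->
  lq_norm q mu nu (indmul (setX E F) a) <=
  (Nb * msr mu E `^ alpha + Nc * msr nu F `^ alpha) / Cpq p q.
Proof.
move=> abc Hb Hc.
have Nb0 : 0 <= Nb by rewrite -lee_fin (le_trans (mnorm_ge0 b) Hb).
have Nc0 : 0 <= Nc by rewrite -lee_fin (le_trans (mnormT_ge0 c) Hc).
have Ci0 : 0 <= (Cpq p q)^-1 by rewrite invr_ge0 ltW ?Cpq_gt0.
have X0 : 0 <= Nb * msr mu E `^ alpha / Cpq p q by rewrite !mulr_ge0 ?powR_ge0.
have Y0 : 0 <= Nc * msr nu F `^ alpha / Cpq p q by rewrite !mulr_ge0 ?powR_ge0.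
rewrite mulrDl -(le_powR2r q_gt0) ?powR_ge0 ?addr_ge0 // lq_normK.
pose om (x : 'I_m * 'I_n) := mu x.1 * nu x.2.
pose f (d : 'M[R]_(m, n)) x := `|indmul (setX E F) d x.1 x.2|.
apply: le_trans (_ : \sum_x (f b x + f c x) `^ q * om x <= _).
  apply: ler_sum => x _; apply: ler_wpM2r; first by rewrite mulr_ge0 ?ltW.
  rewrite /f !mxE le_powR2r ?q_gt0 ?addr_ge0 ?normr_ge0 //.
  by case: ifP => _; rewrite ?abc ?mxE ?ler_normD // !normr0 addr0.
apply: minkowski_sum => // [x|x|x||]; rewrite ?normr_ge0 //.
  by rewrite mulr_ge0 ?ltW.
  rewrite powq_alpha_Cpq ?msr_ge0 //; apply: le_trans (sum_entry_mass_le_mnorm E F Hb).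
  by rewrite -lq_norm_indmul lq_normK; apply: ler_sum => x _; exact: lexx.
rewrite powq_alpha_Cpq ?msr_ge0 //; apply: le_trans (sum_entry_mass_le_mnormT E F Hc).
by rewrite -lq_norm_indmul lq_normK; apply: ler_sum => x _; exact: lexx.
Qed.

Lemma triple_norm_le_weak_norms a b c Nb Nc :
  a = b + c -> (mnorm p q mu nu b <= Nb%:E)%E -> (mnormT p q mu nu c <= Nc%:E)%E ->
  (triple_norm p q t mu nu a <= ((Nb + t * Nc) / Cpq p q)%:E)%E.
Proof.
move=> abc Hb Hc; apply: ge_ereal_sup => _ [[E F] /= [En Fn] <-]; rewrite lee_fin.
have Nb0 : 0 <= Nb by rewrite -lee_fin (le_trans (mnorm_ge0 b) Hb).
have Nc0 : 0 <= Nc by rewrite -lee_fin (le_trans (mnormT_ge0 c) Hc).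
set X := msr mu E `^ alpha; set Y := t^-1 * msr nu F `^ alpha.
have Mp : 0 < Num.max X Y by rewrite lt_max /X (powR_gt0 _ (msr_gt0 mu_gt0 En)).
rewrite mulrC ler_pdivrMr //; apply: le_trans (lq_norm_indmul_le E F abc Hb Hc) _.
rewrite mulrAC ler_pM2r ?invr_gt0 ?Cpq_gt0 //.
rewrite mulrDl; apply: lerD; first by apply: ler_wpM2l; rewrite // le_max lexx.
have -> : Nc * msr nu F `^ alpha = t * Nc * Y by rewrite /Y; field; rewrite gt_eqF.
by apply: ler_wpM2l; rewrite ?mulr_ge0 ?(ltW t_gt0) // le_max lexx orbT.
Qed.

Lemma Cpq_triple_norm_le a b c : a = b + c ->
  ((Cpq p q)%:E * triple_norm p q t mu nu a <=
   mnorm p q mu nu b + t%:E * mnormT p q mu nu c)%E.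
Proof.
move=> abc.
have tc0 : (0 <= t%:E * mnormT p q mu nu c)%E by rewrite mule_ge0 ?mnormT_ge0 // lee_fin ltW.
case Eb : (mnorm p q mu nu b) (mnorm_ge0 b) => [Nb| |] // _; last first.
  by rewrite addye ?leey // gt_eqF // (lt_le_trans _ tc0).
case Ec : (mnormT p q mu nu c) (mnormT_ge0 c) => [Nc| |] // _; last first.
  by rewrite [(t%:E * _)%E]muleC gt0_mulye ?lte_fin // addey ?leey.
have Hb : (mnorm p q mu nu b <= Nb%:E)%E by rewrite Eb.
have Hc : (mnormT p q mu nu c <= Nc%:E)%E by rewrite Ec.
have C0 : (0 <= (Cpq p q)%:E)%E by rewrite lee_fin ltW ?Cpq_gt0.
apply: le_trans (lee_wpmul2l C0 (triple_norm_le_weak_norms abc Hb Hc)) _.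
by rewrite -EFinM -EFinD mulrC divfK ?gt_eqF ?Cpq_gt0.
Qed.

Lemma lq_norm_le_triple_norm a T : (triple_norm p q t mu nu a <= T%:E)%E ->
  forall (E : {set 'I_m}) (F : {set 'I_n}), E != set0 -> F != set0 ->
    lq_norm q mu nu (indmul (setX E F) a) <=
    T * Num.max (msr mu E `^ alpha) (t^-1 * msr nu F `^ alpha).
Proof.
move=> HT E F En Fn; set M := Num.max _ _.
have Mp : 0 < M by rewrite lt_max (powR_gt0 _ (msr_gt0 mu_gt0 En)).
rewrite -ler_pdivrMr // mulrC -lee_fin (le_trans _ HT) //.
apply: ereal_sup_ge; exists (M^-1 * lq_norm q mu nu (indmul (setX E F) a))%:E => //.
by exists (E, F).
Qed.

Lemma exists_split_triple_norm a T : 0 < T -> (triple_norm p q t mu nu a <= T%:E)%E ->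
  exists A : {set 'I_m * 'I_n},
    (mnorm p q mu nu (indmul A a) <= T%:E)%E /\
    (mnormT p q mu nu (indmul (~: A) a) <= (T / t)%:E)%E.
Proof. by move=> T0 /lq_norm_le_triple_norm; exact: exists_split_weak_norms. Qed.

Lemma Kfun_le_twice a T : 0 < T -> (triple_norm p q t mu nu a <= T%:E)%E ->
  (Kfun p q t mu nu a <= (2 * T)%:E)%E.
Proof.
move=> T0 /(exists_split_triple_norm T0) [A [HA HB]].
apply: ereal_inf_le; exists (mnorm p q mu nu (indmul A a) +
                          t%:E * mnormT p q mu nu (indmul (~: A) a))%E.
  exists (indmul A a, indmul (~: A) a) => //=.
  by apply/matrixP => i j; rewrite !mxE inE; case: ((i, j) \in A); rewrite ?addr0 ?add0r.
apply: le_trans (leeD HA (lee_wpmul2l _ HB)) _; first by rewrite lee_fin ltW.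
by rewrite -EFinM -EFinD mulrCA divff ?gt_eqF // mulr1 -mulr2n mulr_natl.
Qed.

Lemma triple_norm_ge0 a : (0 < m)%N -> (0 < n)%N -> (0 <= triple_norm p q t mu nu a)%E.
Proof.
move=> m0 n0; apply: ereal_sup_ge.
exists ((Num.max (msr mu [set: 'I_m] `^ alpha) (t^-1 * msr nu [set: 'I_n] `^ alpha))^-1 *
        lq_norm q mu nu (indmul (setX [set: 'I_m] [set: 'I_n]) a))%:E.
  exists ([set: 'I_m], [set: 'I_n]) => //; split; apply/set0Pn.
    by exists (Ordinal m0); rewrite inE.
  by exists (Ordinal n0); rewrite inE.
by rewrite lee_fin mulr_ge0 ?powR_ge0 // invr_ge0 le_max powR_ge0.
Qed.

(* When [triple_norm a] is finite, apply [Kfun_le_twice] to every [T + e / 2]. *)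
Lemma Kfun_le_2_triple_norm a : (0 < m)%N -> (0 < n)%N ->
  (Kfun p q t mu nu a <= 2%:E * triple_norm p q t mu nu a)%E.
Proof.
move=> m0 n0.
case Et : (triple_norm p q t mu nu a) (triple_norm_ge0 a m0 n0) => [T| |] // T0.
  apply/lee_addgt0Pr => e e0; rewrite lee_fin in T0.
  have Te : (triple_norm p q t mu nu a <= (T + e / 2)%:E)%E.
    by rewrite Et lee_fin lerDl divr_ge0 // ltW.
  apply: le_trans (Kfun_le_twice _ Te) _; first by rewrite ltr_wpDl // divr_gt0.
  by rewrite -EFinM -EFinD lee_fin le_eqVlt; apply: predU1l; field.
by rewrite muleC gt0_mulye ?lte_fin // leey.
Qed.

End Matrices.

Unset Implicit Arguments.
Local Open Scope classical_set_scope.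

Theorem theorem2p5 (R : realType) (m n : nat) (mu : 'I_m -> R) (nu : 'I_n -> R)
  (t q : R) (p : \bar R) :
  (0 < m)%N -> (0 < n)%N ->
  (forall i, 0 < mu i) -> (forall j, 0 < nu j) ->
  0 < t -> 1 <= q -> (q%:E < p)%E ->
  (forall a : 'M[R]_(m, n),
     ((Cpq p q)%:E * triple_norm p q t mu nu a <= Kfun p q t mu nu a)%E /\
     (Kfun p q t mu nu a <= 2%:E * triple_norm p q t mu nu a)%E) /\
  (forall a : 'M[R]_(m, n),
     (triple_norm p q t mu nu a <= 1)%E ->
     exists A B : {set 'I_m * 'I_n},
       [/\ (A :|: B)%SET = [set: 'I_m * 'I_n]%SET, (A :&: B)%SET = finset.set0,
           (mnorm p q mu nu (indmul A a) <= 1)%E &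
           (mnormT p q mu nu (indmul B a) <= (t^-1)%:E)%E]).
Proof.
move=> m0 n0 mu0 nu0 t0 q1 qp; split=> a.
  split; last exact: Kfun_le_2_triple_norm.
  apply: le_ereal_inf_tmp => _ [[b c] /= abc <-].
  exact: Cpq_triple_norm_le.
move=> /(exists_split_triple_norm mu0 nu0 t0 q1 qp ltr01) [A [HA HB]].
exists A, (~: A)%SET; split => //; [exact: setUCr | exact: setICr | by rewrite -div1r].
Qed.
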